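(* Let $\widetilde{\Sigma}_1,\widetilde{\Sigma}_2$ be disjoint visibly pushdown alphabets, $\widetilde{\Sigma}=\widetilde{\Sigma}_1\uplus\widetilde{\Sigma}_2$, and $P_1\subseteq\widetilde{\Sigma}_1^*$, $P_2\subseteq\widetilde{\Sigma}_2^*$ well-matched visibly pushdown languages. If $\prec$ is a visibly pushdown contextual order on $\widetilde{\Sigma}$ and $\mathrm{red}_\prec(P_1\parallel P_2)\subseteq\mathsf{wn}(P_1\parallel P_2)$, then $\mathrm{red}_\prec(P_1\parallel P_2)$ is a visibly pushdown language.
   Context: A visibly pushdown (VP) alphabet is a finite alphabet partitioned into calls, returns and internals; $\widetilde{\Sigma}$ has as calls/returns/internals the unions of those of $\widetilde{\Sigma}_1,\widetilde{\Sigma}_2$. Calls and returns in a word are matched like opening and closing parentheses (internals ignored); unmatched ones are pending; a word is well-matched if none are pending. A visibly pushdown automaton (VPA) is a pushdown automaton with bottom symbol $\bot$ that pushes one non-$\bot$ symbol on each call, pops the top symbol on each return (reading $\bot$ on empty stack without removing it) and leaves the stack unchanged on internals; a visibly pushdown language is one accepted by a VPA. Shuffle: $P_1\parallel P_2=\{w\in\widetilde{\Sigma}^*:\Pi_{\widetilde{\Sigma}_i}(w)\in P_i\}$ where $\Pi_{\widetilde{\Sigma}_i}$ erases letters outside $\widetilde{\Sigma}_i$. A word is well-nested if every matched call–return pair consists of two letters from the same $\widetilde{\Sigma}_k$; $\mathsf{wn}(L)$ is the set of well-nested words of $L$. $\mathbb{I}=\{(a,b):a\in\widetilde{\Sigma}_i,b\in\widetilde{\Sigma}_j,i\ne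 j\}$, $\equiv_{\mathbb{I}}$ the least reflexive transitive relation with $uabv\equiv_{\mathbb{I}}ubav$ for $(a,b)\in\mathbb{I}$. A contextual order is a map $\prec$ from $\widetilde{\Sigma}^*$ to strict total orders on $\widetilde{\Sigma}$; it induces $\preceq$ on words: $\sigma\preceq\rho$ iff $\sigma$ is a prefix of $\rho$ or $\sigma=\alpha a\beta$, $\rho=\alpha b\gamma$ with $a\prec_\alpha b$. $\mathrm{red}_\prec(L)=\{w\in L:\forall u\in L,(u\equiv_{\mathbb{I}}w\wedge u\preceq w)\Rightarrow u=w\}$. A contextual order is visibly pushdown if there is a complete deterministic VPA $A$ over $\widetilde{\Sigma}$ and a map $\mathsf{ord}$ from its states to strict total orders on $\widetilde{\Sigma}$ with $\prec_w=\mathsf{ord}(q)$, $q$ the state reached by $A$ after reading $w$, for every $w$. *)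

From Stdlib Require Import Relations.
From mathcomp Require Import all_boot.
Set Implicit Arguments. Unset Strict Implicit. Unset Printing Implicit Defensive.

Inductive vkind := VCall | VRet | VInt.

(* A VP alphabet is a finType [S] with a map [kind : S -> vkind]
   (the partition into calls / returns / internals).
   The disjoint union of two VP alphabets is the sum type. *)
Definition sumkind (S1 S2 : Type) (k1 : S1 -> vkind) (k2 : S2 -> vkind)
  (x : S1 + S2) : vkind :=
  match x with inl a => k1 a | inr b => k2 b end.

Definition lang (S : Type) := seq S -> Prop.

Fixpoint scan (S : Type) (kind : S -> vkind) (stk : seq S) (w : seq S)
  : seq (S * S) * seq S * seq S :=
  match w with
  | [::] => ([::], [::], stk)
  | a :: w' =>
    match kind a with
    | VCall => scan kind (a :: stk) w'
    | VInt => scan kind stk w'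
    | VRet =>
      match stk with
      | [::] => let: (ps, pr, pc) := scan kind [::] w' in (ps, a :: pr, pc)
      | c :: stk' => let: (ps, pr, pc) := scan kind stk' w' in ((c, a) :: ps, pr, pc)
      end
    end
  end.

Definition matched_pairs S kind (w : seq S) := (scan kind [::] w).1.1.
Definition pending_rets S kind (w : seq S) := (scan kind [::] w).1.2.
Definition pending_calls S kind (w : seq S) := (scan kind [::] w).2.

Definition well_matched S (kind : S -> vkind) (w : seq S) : Prop :=
  pending_calls kind w = [::] /\ pending_rets kind w = [::].

Definition wm_lang S (kind : S -> vkind) (L : lang S) : Prop :=
  forall w, L w -> well_matched kind w.

(** * Visibly pushdown automata (nondeterministic, acceptance by final state);
    [None] plays the role of the bottom symbol. *)
Record vpa (S Q G : Type) := VPA {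
  v_init  : Q -> bool;
  v_final : Q -> bool;
  v_call  : Q -> S -> Q -> G -> bool;
  v_ret   : Q -> S -> option G -> Q -> bool;
  v_int   : Q -> S -> Q -> bool }.

Definition vstep S Q G (kind : S -> vkind) (A : vpa S Q G)
  (q : Q) (st : seq G) (a : S) (q' : Q) (st' : seq G) : Prop :=
  match kind a with
  | VCall => exists g, v_call A q a q' g /\ st' = g :: st
  | VInt => v_int A q a q' /\ st' = st
  | VRet => match st with
            | [::] => v_ret A q a None q' /\ st' = [::]
            | g :: s => v_ret A q a (Some g) q' /\ st' = s
            end
  end.

Fixpoint vrun S Q G (kind : S -> vkind) (A : vpa S Q G)
  (q : Q) (st : seq G) (w : seq S) (q' : Q) (st' : seq G) : Prop :=
  match w with
  | [::] => q = q' /\ st = st'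
  | a :: w' => exists q1 st1, vstep kind A q st a q1 st1 /\ vrun kind A q1 st1 w' q' st'
  end.

Definition vaccepts S Q G (kind : S -> vkind) (A : vpa S Q G) (w : seq S) : Prop :=
  exists q0 qf st, v_init A q0 /\ v_final A qf /\ vrun kind A q0 [::] w qf st.

Definition VPL (S : finType) (kind : S -> vkind) (L : lang S) : Prop :=
  exists (Q G : finType) (A : vpa S Q G), forall w, L w <-> vaccepts kind A w.

(** * Complete deterministic VPA (only the state reached matters here) *)
Record dvpa (S Q G : Type) := DVPA {
  d_init : Q;
  d_call : Q -> S -> Q * G;
  d_ret  : Q -> S -> option G -> Q;
  d_int  : Q -> S -> Q }.

Definition dstep S Q G (kind : S -> vkind) (A : dvpa S Q G)
  (c : Q * seq G) (a : S) : Q * seq G :=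
  let: (q, st) := c in
  match kind a with
  | VCall => let: (q', g) := d_call A q a in (q', g :: st)
  | VInt => (d_int A q a, st)
  | VRet => match st with
            | [::] => (d_ret A q a None, [::])
            | g :: s => (d_ret A q a (Some g), s)
            end
  end.

Definition dstate S Q G (kind : S -> vkind) (A : dvpa S Q G) (w : seq S) : Q :=
  (foldl (dstep kind A) (d_init A, [::]) w).1.

Definition strict_total (S : eqType) (r : rel S) : Prop :=
  (forall a, ~~ r a a) /\
  (forall a b c, r a b -> r b c -> r a c) /\
  (forall a b, a != b -> r a b || r b a).

Definition contextual_order (S : eqType) (prec : seq S -> rel S) : Prop :=
  forall w, strict_total (prec w).

Definition vp_contextual_order (S : finType) (kind : S -> vkind)
  (prec : seq S -> rel S) : Prop :=
  contextual_order prec /\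
  exists (Q G : finType) (A : dvpa S Q G) (ord : Q -> rel S),
    (forall q, strict_total (ord q)) /\
    (forall w, prec w = ord (dstate kind A w)).

Definition word_le (S : eqType) (prec : seq S -> rel S) (s r : seq S) : Prop :=
  prefix s r \/
  exists al a be b ga, s = al ++ a :: be /\ r = al ++ b :: ga /\ prec al a b.

Definition proj1s (S1 S2 : Type) (w : seq (S1 + S2)) : seq S1 :=
  pmap (fun x => match x with inl a => Some a | inr _ => None end) w.
Definition proj2s (S1 S2 : Type) (w : seq (S1 + S2)) : seq S2 :=
  pmap (fun x => match x with inl _ => None | inr b => Some b end) w.

Definition shuffle S1 S2 (P1 : lang S1) (P2 : lang S2) : lang (S1 + S2) :=
  fun w => P1 (proj1s w) /\ P2 (proj2s w).

Definition side (S1 S2 : Type) (x : S1 + S2) : bool :=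
  if x is inl _ then true else false.

Definition indep S1 S2 (a b : S1 + S2) : bool := side a != side b.

Definition swap1 S1 S2 (u v : seq (S1 + S2)) : Prop :=
  exists x y a b, indep a b /\ u = x ++ a :: b :: y /\ v = x ++ b :: a :: y.

Definition equivI S1 S2 : relation (seq (S1 + S2)) := clos_refl_trans _ (@swap1 S1 S2).

Definition well_nested (S1 S2 : eqType) (k1 : S1 -> vkind) (k2 : S2 -> vkind)
  (w : seq (S1 + S2)) : Prop :=
  forall c r, (c, r) \in matched_pairs (sumkind k1 k2) w -> side c = side r.


Definition wn (S1 S2 : eqType) k1 k2 (L : lang (S1 + S2)) : lang (S1 + S2) :=
  fun w => L w /\ @well_nested S1 S2 k1 k2 w.

Definition red (S1 S2 : eqType) (prec : seq (S1 + S2) -> rel (S1 + S2))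
  (L : lang (S1 + S2)) : lang (S1 + S2) :=
  fun w => L w /\ forall u, L u -> equivI u w -> word_le prec u w -> u = w.

From Stdlib Require Import Relations.
From mathcomp Require Import all_boot.
Set Implicit Arguments. Unset Strict Implicit. Unset Printing Implicit Defensive.

(* A word w of P1 || P2 fails to be reduced exactly when it has a descent: a
   factorisation w = al b v a be where a and b lie in different components, the
   block b v lies in the component of b, and a <_al b.  Then a commutes to the
   left of b v, giving an equivalent smaller word; conversely, if u ~ w and u < w
   first differ at al, with letters a <> b, then a occurs later in w and is
   preceded there only by letters of the component of b.
   Descents are detected deterministically by running the automaton of the order
   together with the set of letters that would complete a descent if read next.
   The well-nested shuffle wn (P1 || P2) is recognised by the product of the
   automata of P1 and P2 with stack symbols tagged by component; filtering it by
   the descent detector yields red (P1 || P2), which is contained in it. *)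

Lemma cat_injr (T : Type) (s : seq T) : injective (cat s).
Proof. by elim: s => //= x s IH t1 t2 [/IH]. Qed.

Lemma rcons_eq_cat (T : Type) (w : seq T) x p a be :
  rcons w x = p ++ a :: be ->
  (be = [::] /\ a = x /\ w = p) \/ exists be', be = rcons be' x /\ w = p ++ a :: be'.
Proof.
case/lastP: be => [|be y]; first by rewrite cats1 => /rcons_inj [-> ->]; left.
by rewrite -rcons_cons -rcons_cat => /rcons_inj [-> ->]; right; exists be.
Qed.

Lemma filter_eq_cons (T : Type) (p : pred T) s x t :
  filter p s = x :: t -> exists v r, s = v ++ x :: r /\ all (predC p) v.
Proof.
elim: s => //= y s IH; case: ifP => [_ [<- _] | py /IH [v [r [-> Hv]]]].
  by exists [::], s.
by exists (y :: v), r; rewrite /= py.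
Qed.

Section Commutation.
Variables S1 S2 : Type.
Implicit Types (u w x y z al be ga : seq (S1 + S2)) (a b : S1 + S2).

Lemma equivI_invariant (X : Type) (f : seq (S1 + S2) -> X) :
  (forall x y a b, indep a b -> f (x ++ a :: b :: y) = f (x ++ b :: a :: y)) ->
  forall u w, equivI u w -> f u = f w.
Proof.
move=> Hf u w; elim=> [_ _ [x [y [a [b [Hab [-> ->]]]]]] | // | _ _ _ _ -> _ -> //].
exact: Hf.
Qed.

Lemma equivI_size u w : equivI u w -> size u = size w.
Proof. by apply: equivI_invariant => x y a b _; rewrite !size_cat. Qed.

Lemma equivI_proj u w : equivI u w -> proj1s u = proj1s w /\ proj2s u = proj2s w.
Proof.
by move=> E; split; apply: equivI_invariant E => x y [a|a] [b|b] //= _;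
  rewrite /proj1s /proj2s !pmap_cat.
Qed.

Lemma equivI_side_filter s u w :
  equivI u w -> [seq x <- u | side x == s] = [seq x <- w | side x == s].
Proof.
apply: equivI_invariant => x y a b; rewrite /indep !filter_cat /=.
by case: (side a); case: (side b); case: s.
Qed.

Lemma equivI_move x a y z :
  all (fun c => side c != side a) y -> equivI (x ++ a :: y ++ z) (x ++ y ++ a :: z).
Proof.
elim: y x => [|c y IH] x /=; first by move=> _; apply: rt_refl.
case/andP=> Hc Hy; apply: (@rt_trans _ _ _ (x ++ c :: a :: y ++ z)).
  by apply: rt_step; exists x, (y ++ z), a, c; rewrite /indep eq_sym.
by have := IH (rcons x c) Hy; rewrite !cat_rcons.
Qed.

Lemma equivI_first_diff al a be b ga :
  equivI (al ++ a :: be) (al ++ b :: ga) -> a <> b ->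
  side a != side b /\
  exists v be', ga = v ++ a :: be' /\ all (fun c => side c == side b) v.
Proof.
move=> /(equivI_side_filter (side a)); rewrite !filter_cat => /cat_injr /=.
rewrite (eqxx (side a)).
have [-> | Nab] := eqVneq (side b) (side a); first by move=> [Eab _] /(_ Eab).
move=> E _; have [v [be' [-> Hv]]] := filter_eq_cons (esym E); split=> //.
exists v, be'; split=> //; apply: sub_all Hv => c /=.
by move: Nab; case: (side c); case: (side a); case: (side b).
Qed.

End Commutation.

Section Descents.
Variables (S1 S2 : Type) (prec : seq (S1 + S2) -> rel (S1 + S2)).
Implicit Types (w : seq (S1 + S2)) (x y : S1 + S2).

Definition descent w : Prop :=
  exists al b v a be, w = al ++ b :: v ++ a :: be /\ side a != side b /\
    all (fun c => side c == side b) v /\ prec al a b.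

Definition pending_descent w y : Prop :=
  exists al c v, w = al ++ c :: v /\ side y != side c /\
    all (fun z => side z == side c) v /\ prec al y c.

Lemma descent_nil : ~ descent [::].
Proof. by move=> [[|? ?] [? [? [? [? []]]]]]. Qed.

Lemma pending_descent_nil y : ~ pending_descent [::] y.
Proof. by move=> [[|? ?] [? [? []]]]. Qed.

Lemma descent_rcons w x : descent (rcons w x) <-> descent w \/ pending_descent w x.
Proof.
split.
  move=> [al [b [v [a [be [Ew [Hab [Hv Hp]]]]]]]].
  rewrite -cat_cons catA in Ew; case: (rcons_eq_cat Ew) => [[_ [<- ->]] | [be' [_ ->]]].
    by right; exists al, b, v.
  by left; exists al, b, v, a, be'; rewrite -catA.
case=> [[al [b [v [a [be [-> Hrest]]]]]] | [al [c [v [-> Hrest]]]]].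
  by exists al, b, v, a, (rcons be x); rewrite !(rcons_cat, rcons_cons).
by exists al, c, v, x, [::]; rewrite -cats1 -catA.
Qed.

Lemma pending_descent_rcons w x y :
  pending_descent (rcons w x) y <->
  side y != side x /\ (pending_descent w y \/ prec w y x).
Proof.
split.
  move=> [al [c [v [Ew [Hyc [Hv Hp]]]]]].
  case: (rcons_eq_cat Ew) => [[_ [<- ->]] | [v' [Ev ->]]]; first by split=> //; right.
  move: Hv; rewrite Ev all_rcons => /andP [/eqP -> Hv'].
  by split=> //; left; exists al, c, v'.
case=> Hyx [[al [c [v [-> [Hyc [Hv Hp]]]]]] | Hp]; last by exists w, x, [::]; rewrite cats1.
have Hxc : side x == side c by move: Hyx Hyc; case: (side x); case: (side y); case: (side c).
by exists al, c, (rcons v x); rewrite rcons_cat rcons_cons all_rcons Hxc.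
Qed.

End Descents.

Lemma red_shuffleP (S1 S2 : eqType) (prec : seq (S1 + S2) -> rel (S1 + S2))
    (P1 : lang S1) (P2 : lang S2) w :
  (forall u a, ~~ prec u a a) ->
  red prec (shuffle P1 P2) w <-> shuffle P1 P2 w /\ ~ descent prec w.
Proof.
move=> irr; split.
  move=> [Hw Hmin]; split=> // [[al [b [v [a [be [Ew [Hab [Hv Hp]]]]]]]]].
  have Hu : equivI (al ++ a :: (b :: v) ++ be) w.
    rewrite Ew; apply: equivI_move; rewrite /= eq_sym Hab.
    by apply: sub_all Hv => c /eqP ->; rewrite eq_sym.
  have [E1 E2] := equivI_proj Hu.
  have : al ++ a :: (b :: v) ++ be = w.
    apply: Hmin Hu _; first by rewrite /shuffle E1 E2.
    by right; exists al, a, (b :: v ++ be), b, (v ++ a :: be).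
  by rewrite Ew => /cat_injr [Eab]; move: Hab; rewrite Eab eqxx.
move=> [Hw Hnd]; split=> // u _ Hu [Hpre | [al [a [be [b [ga [Eu [Ew Hp]]]]]]]].
  by move: Hpre; rewrite prefixE (equivI_size Hu) take_size => /eqP.
have Nab : a <> b by move=> Eab; move: Hp; rewrite Eab (negbTE (irr _ _)).
rewrite Eu Ew in Hu; have [Hab [v [be' [Ega Hv]]]] := equivI_first_diff Hu Nab.
by case: Hnd; exists al, b, v, a, be'; rewrite Ew Ega.
Qed.

Section Runs.
Variables (S Q G : Type) (kind : S -> vkind) (A : vpa S Q G).

Lemma vrun_cat q st u v q' st' :
  vrun kind A q st (u ++ v) q' st' <->
  exists q1 st1, vrun kind A q st u q1 st1 /\ vrun kind A q1 st1 v q' st'.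
Proof.
elim: u q st => [|a u IH] q st /=.
  by split=> [H | [q1 [st1 [[-> ->] H]]]] //; exists q, st.
split=> [[q1 [st1 [Hs /IH [q2 [st2 [H1 H2]]]]]] | [q2 [st2 [[q1 [st1 [Hs H1]]] H2]]]].
  by exists q2, st2; split=> //; exists q1, st1.
by exists q1, st1; split=> //; apply/IH; exists q2, st2.
Qed.

End Runs.

Lemma VPL_ext (S : finType) (kind : S -> vkind) (L L' : lang S) :
  (forall w, L w <-> L' w) -> VPL kind L -> VPL kind L'.
Proof.
move=> E [Q [G [A HA]]]; exists Q, G, A => w.
by split=> [/E /HA | /HA /E].
Qed.

#[local] Arguments dstep : simpl never.

Section DvpaProduct.
Variables (S Q G : Type) (Qd Gd : eqType) (kind : S -> vkind).
Variables (A : vpa S Q G) (D : dvpa S Qd Gd) (acc : Qd -> bool).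

Definition prod_dvpa : vpa S (Q * Qd) (G * Gd) :=
  VPA (fun q => v_init A q.1 && (q.2 == d_init D))
      (fun q => v_final A q.1 && acc q.2)
      (fun q x q' g => v_call A q.1 x q'.1 g.1 && ((q'.2, g.2) == d_call D q.2 x))
      (fun q x o q' => v_ret A q.1 x (omap fst o) q'.1 &&
                         (q'.2 == d_ret D q.2 x (omap snd o)))
      (fun q x q' => v_int A q.1 x q'.1 && (q'.2 == d_int D q.2 x)).

Lemma prod_dvpa_step_sound q st x q' st' :
  vstep kind prod_dvpa q st x q' st' ->
  vstep kind A q.1 (map fst st) x q'.1 (map fst st') /\
  dstep kind D (q.2, map snd st) x = (q'.2, map snd st').
Proof.
rewrite /vstep /dstep; case: (kind x).
- by move=> [g [/andP [Hc /eqP <-] ->]]; split=> //; exists g.1.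
- by case: st => [|g st] [/andP [Hr /eqP ->] ->].
- by move=> [/andP [Hi /eqP ->] ->].
Qed.

Lemma prod_dvpa_step_complete q qd st x q' s' :
  vstep kind A q (map fst st) x q' s' ->
  let c := dstep kind D (qd, map snd st) x in
  exists st', [/\ vstep kind prod_dvpa (q, qd) st x (q', c.1) st',
                  map fst st' = s' & map snd st' = c.2].
Proof.
rewrite /vstep /dstep; case: (kind x).
- move=> [g [Hc ->]]; case Ed: (d_call D qd x) => [qd' gd].
  by exists ((g, gd) :: st); split=> //; exists (g, gd); rewrite /= Hc Ed eqxx.
- case: st => [|[g gd] st] [Hr ->]; first by exists [::]; rewrite /= Hr eqxx.
  by exists st; rewrite /= Hr eqxx.
- by move=> [Hi ->]; exists st; rewrite /= Hi eqxx.
Qed.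

Lemma prod_dvpa_sound w q st q' st' :
  vrun kind prod_dvpa q st w q' st' ->
  vrun kind A q.1 (map fst st) w q'.1 (map fst st') /\
  foldl (dstep kind D) (q.2, map snd st) w = (q'.2, map snd st').
Proof.
elim: w q st => [|x w IH] q st /=; first by case=> -> ->.
move=> [q1 [st1 [/prod_dvpa_step_sound [Hs ->] /IH [Hr Hf]]]].
by split=> //; exists q1.1, (map fst st1).
Qed.

Lemma prod_dvpa_complete w q qd st q' s' :
  vrun kind A q (map fst st) w q' s' ->
  exists st', vrun kind prod_dvpa (q, qd) st w
                (q', (foldl (dstep kind D) (qd, map snd st) w).1) st'.
Proof.
elim: w q qd st => [|x w IH] q qd st /=; first by case=> -> _; exists st.
move=> [q1 [s1 [/(prod_dvpa_step_complete qd) [st1 [Hs Hfst Hsnd]] Hr]]].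
set c := dstep kind D (qd, map snd st) x in Hs Hsnd *.
rewrite -Hfst in Hr; have [st' Hst'] := IH _ c.1 _ Hr.
by exists st', (q1, c.1), st1; rewrite Hsnd -surjective_pairing in Hst'.
Qed.

End DvpaProduct.

Lemma VPL_dvpa_filter (S : finType) (kind : S -> vkind) (L : lang S)
    (Qd Gd : finType) (D : dvpa S Qd Gd) (acc : Qd -> bool) :
  VPL kind L -> VPL kind (fun w => L w /\ acc (dstate kind D w)).
Proof.
move=> [Q [G [A HA]]]; exists (Q * Qd)%type, (G * Gd)%type, (prod_dvpa A D acc) => w.
split.
  move=> [/HA [q0 [qf [st [Hi [Hf Hr]]]]] Hacc].
  have [st' Hst'] := prod_dvpa_complete D acc (st := [::]) (d_init D) Hr.
  by exists (q0, d_init D), (qf, dstate kind D w), st'; rewrite /= Hi Hf Hacc eqxx.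
move=> [[q0 qd0] [[qf qdf] [st [/andP [Hi /eqP Hd] [/andP [Hf Hacc] Hr]]]]].
have [H1 H2] := prod_dvpa_sound Hr.
split; first by apply/HA; exists q0, qf, (map fst st).
by rewrite /dstate -Hd H2.
Qed.

Section Tracking.
Variables (S Q G M : Type) (kind : S -> vkind) (D : dvpa S Q G).
Variables (m0 : M) (upd : Q -> M -> S -> M).

Definition dvpa_track : dvpa S (Q * M) G :=
  DVPA (d_init D, m0)
       (fun c x => let: (q', g) := d_call D c.1 x in ((q', upd c.1 c.2 x), g))
       (fun c x o => (d_ret D c.1 x o, upd c.1 c.2 x))
       (fun c x => (d_int D c.1 x, upd c.1 c.2 x)).

Lemma dvpa_track_step q m st x :
  dstep kind dvpa_track ((q, m), st) x =
  let: (q', st') := dstep kind D (q, st) x in ((q', upd q m x), st').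
Proof.
rewrite /dstep /=; case: (kind x) => //; first by case: (d_call D q x).
by case: st.
Qed.

Lemma foldl_track w q m st :
  let c := foldl (dstep kind dvpa_track) ((q, m), st) w in
  (c.1.1, c.2) = foldl (dstep kind D) (q, st) w.
Proof.
elim: w q m st => [|x w IH] q m st //=.
by rewrite dvpa_track_step; case: (dstep kind D (q, st) x) => q' st'; apply: IH.
Qed.

Lemma dstate_track_rcons w x :
  (dstate kind dvpa_track (rcons w x)).2 =
  upd (dstate kind D w) (dstate kind dvpa_track w).2 x.
Proof.
rewrite /dstate -cats1 foldl_cat /=; have := foldl_track w (d_init D) m0 [::].
case: (foldl _ _ w) => [[q m] st] /= <-.
by rewrite dvpa_track_step; case: (dstep kind D (q, st) x).
Qed.

End Tracking.

Section DescentMonitor.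
Variables (S1 S2 : finType) (kind : S1 + S2 -> vkind) (Q G : Type).
Variables (D : dvpa (S1 + S2) Q G) (ord : Q -> rel (S1 + S2)).
Variable prec : seq (S1 + S2) -> rel (S1 + S2).
Hypothesis prec_dstate : forall w, prec w = ord (dstate kind D w).

Definition descent_update (q : Q) (m : {set S1 + S2} * bool) (x : S1 + S2) :
    {set S1 + S2} * bool :=
  ([set y | (side y != side x) && ((y \in m.1) || ord q y x)], m.2 && (x \notin m.1)).

Definition descent_monitor : dvpa (S1 + S2) (Q * ({set S1 + S2} * bool)) G :=
  dvpa_track D (set0, true) descent_update.

Lemma descent_monitorP w :
  let m := (dstate kind descent_monitor w).2 in
  (forall y, y \in m.1 <-> pending_descent prec w y) /\ (m.2 <-> ~ descent prec w).
Proof.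
elim/last_ind: w => [|w x [IH1 IH2]] /=.
  split=> [y | ]; last by split=> // _; exact: descent_nil.
  by rewrite in_set0; split=> // /pending_descent_nil.
rewrite dstate_track_rcons /descent_update /=.
set m := (dstate kind descent_monitor w).2 in IH1 IH2 *.
split=> [y | ].
  rewrite inE; split.
    case/andP=> Hyx /orP H; apply/pending_descent_rcons; split=> //.
    by case: H => [/IH1 | ]; [left | rewrite prec_dstate; right].
  case/pending_descent_rcons=> Hyx H; rewrite Hyx; apply/orP.
  by case: H => [/IH1 | ]; [left | rewrite -prec_dstate; right].
split.
  by case/andP=> /IH2 Hnd /negP Hx /descent_rcons [// | /IH1].
move=> H; apply/andP; split.
  by apply/IH2 => Hd; apply: H; apply/descent_rcons; left.
by apply/negP => /IH1 Hp; apply: H; apply/descent_rcons; right.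
Qed.

End DescentMonitor.

Section NestedShuffle.
Variables (S1 S2 : Type) (k1 : S1 -> vkind) (k2 : S2 -> vkind).
Local Notation K := (sumkind k1 k2).

Fixpoint nested_from (sides : seq bool) (w : seq (S1 + S2)) : Prop :=
  match w with
  | [::] => True
  | a :: w' =>
    match K a with
    | VCall => nested_from (side a :: sides) w'
    | VInt => nested_from sides w'
    | VRet => if sides is s :: sides' then s = side a /\ nested_from sides' w'
              else nested_from [::] w'
    end
  end.

Variables (Q1 Q2 : eqType) (G1 G2 : Type) (A1 : vpa S1 Q1 G1) (A2 : vpa S2 Q2 G2).

Definition shuffle_vpa : vpa (S1 + S2) (Q1 * Q2) (G1 + G2) :=
  VPA (fun q => v_init A1 q.1 && v_init A2 q.2)
      (fun q => v_final A1 q.1 && v_final A2 q.2)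
      (fun q x q' g => match x, g with
         | inl a, inl g1 => v_call A1 q.1 a q'.1 g1 && (q'.2 == q.2)
         | inr b, inr g2 => v_call A2 q.2 b q'.2 g2 && (q'.1 == q.1)
         | _, _ => false end)
      (fun q x o q' => match x, o with
         | inl a, None => v_ret A1 q.1 a None q'.1 && (q'.2 == q.2)
         | inl a, Some (inl g) => v_ret A1 q.1 a (Some g) q'.1 && (q'.2 == q.2)
         | inr b, None => v_ret A2 q.2 b None q'.2 && (q'.1 == q.1)
         | inr b, Some (inr g) => v_ret A2 q.2 b (Some g) q'.2 && (q'.1 == q.1)
         | _, _ => false end)
      (fun q x q' => match x with
         | inl a => v_int A1 q.1 a q'.1 && (q'.2 == q.2)
         | inr b => v_int A2 q.2 b q'.2 && (q'.1 == q.1) end).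

Lemma shuffle_vpa_step_sound q st x q' st' :
  vstep K shuffle_vpa q st x q' st' ->
  [/\ vrun k1 A1 q.1 (proj1s st) (proj1s [:: x]) q'.1 (proj1s st'),
      vrun k2 A2 q.2 (proj2s st) (proj2s [:: x]) q'.2 (proj2s st') &
      forall w, nested_from [seq side g | g <- st'] w ->
                nested_from [seq side g | g <- st] (x :: w)].
Proof.
case: x => a /=; rewrite /vstep /=.
- case: (k1 a).
  + move=> [[g|g] [//= /andP [Hc /eqP ->] ->]].
    by split=> //; exists q'.1, (g :: proj1s st); split=> //; exists g.
  + case: st => [|[g|g] st] [//= /andP [Hr /eqP ->] ->].
      by split=> //; exists q'.1, [::].
    by split=> //; exists q'.1, (proj1s st).
  + by move=> [/andP [Hi /eqP ->] ->]; split=> //; exists q'.1, (proj1s st).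
- case: (k2 a).
  + move=> [[g|g] [//= /andP [Hc /eqP ->] ->]].
    by split=> //; exists q'.2, (g :: proj2s st); split=> //; exists g.
  + case: st => [|[g|g] st] [//= /andP [Hr /eqP ->] ->].
      by split=> //; exists q'.2, [::].
    by split=> //; exists q'.2, (proj2s st).
  + by move=> [/andP [Hi /eqP ->] ->]; split=> //; exists q'.2, (proj2s st).
Qed.

Lemma shuffle_vpa_step_complete q1 q2 st x p1 p2 t1 t2 w :
  vrun k1 A1 q1 (proj1s st) (proj1s [:: x]) p1 t1 ->
  vrun k2 A2 q2 (proj2s st) (proj2s [:: x]) p2 t2 ->
  nested_from [seq side g | g <- st] (x :: w) ->
  exists st', [/\ vstep K shuffle_vpa (q1, q2) st x (p1, p2) st',
    proj1s st' = t1, proj2s st' = t2 & nested_from [seq side g | g <- st'] w].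
Proof.
case: x => a /=; rewrite /vstep /=.
- move=> [r1 [s1 [Hs [<- <-]]]] [<- <-]; case: (k1 a) Hs.
  + move=> [g [Hc ->]] N; exists (inl g :: st).
    by split=> //; exists (inl g); rewrite /= Hc eqxx.
  + case: st => [|[g|g] st] /=; last by move=> _ [].
      by move=> [Hr ->] N; exists [::]; rewrite /= Hr eqxx.
    by move=> [Hr ->] [_ N]; exists st; rewrite /= Hr eqxx.
  + by move=> [Hi ->] N; exists st; rewrite /= Hi eqxx.
- move=> [<- <-] [r2 [s2 [Hs [<- <-]]]]; case: (k2 a) Hs.
  + move=> [g [Hc ->]] N; exists (inr g :: st).
    by split=> //; exists (inr g); rewrite /= Hc eqxx.
  + case: st => [|[g|g] st] /=; [| by move=> _ [] |].
      by move=> [Hr ->] N; exists [::]; rewrite /= Hr eqxx.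
    by move=> [Hr ->] [_ N]; exists st; rewrite /= Hr eqxx.
  + by move=> [Hi ->] N; exists st; rewrite /= Hi eqxx.
Qed.

Lemma shuffle_vpa_sound w q st q' st' :
  vrun K shuffle_vpa q st w q' st' ->
  [/\ vrun k1 A1 q.1 (proj1s st) (proj1s w) q'.1 (proj1s st'),
      vrun k2 A2 q.2 (proj2s st) (proj2s w) q'.2 (proj2s st') &
      nested_from [seq side g | g <- st] w].
Proof.
elim: w q st => [|x w IH] q st; first by case=> -> ->.
move=> [q1 [st1 [/shuffle_vpa_step_sound [R1 R2 N] /IH [R1' R2' N']]]].
rewrite -cat1s /proj1s /proj2s !pmap_cat; split; last exact: N.
  by apply/vrun_cat; exists q1.1, (proj1s st1).
by apply/vrun_cat; exists q1.2, (proj2s st1).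
Qed.

Lemma shuffle_vpa_complete w q1 q2 st p1 p2 t1 t2 :
  vrun k1 A1 q1 (proj1s st) (proj1s w) p1 t1 ->
  vrun k2 A2 q2 (proj2s st) (proj2s w) p2 t2 ->
  nested_from [seq side g | g <- st] w ->
  exists st', vrun K shuffle_vpa (q1, q2) st w (p1, p2) st'.
Proof.
elim: w q1 q2 st => [|x w IH] q1 q2 st; first by move=> [-> _] [-> _] _; exists st.
rewrite -cat1s /proj1s /proj2s !pmap_cat.
move=> /vrun_cat [r1 [u1 [R1 R1']]] /vrun_cat [r2 [u2 [R2 R2']]] N.
have [st1 [Hs E1 E2 N']] := shuffle_vpa_step_complete R1 R2 N.
rewrite -E1 in R1'; rewrite -E2 in R2'.
have [st' Hst'] := IH _ _ _ R1' R2' N'.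
by exists st', (r1, r2), st1.
Qed.

End NestedShuffle.

Lemma nested_from_scan (S1 S2 : eqType) (k1 : S1 -> vkind) (k2 : S2 -> vkind) stk w :
  nested_from k1 k2 [seq side c | c <- stk] w <->
  forall c r, (c, r) \in (scan (sumkind k1 k2) stk w).1.1 -> side c = side r.
Proof.
elim: w stk => [|a w IH] stk //=; case: (sumkind k1 k2 a) => //; first exact: (IH (a :: stk)).
case: stk => [|c stk].
  by have := IH [::]; case: (scan (sumkind k1 k2) [::] w) => [[ps pr] pc].
have := IH stk; case: (scan (sumkind k1 k2) stk w) => [[ps pr] pc] /= [I1 I2]; split.
  by move=> [Hca /I1 H] c' r'; rewrite in_cons => /orP [/eqP [-> ->] | /H].
move=> H; split; first by apply: H; rewrite in_cons eqxx.
by apply: I2 => c' r' Hin; apply: H; rewrite in_cons Hin orbT.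
Qed.

Lemma VPL_wn_shuffle (S1 S2 : finType) (k1 : S1 -> vkind) (k2 : S2 -> vkind)
    (P1 : lang S1) (P2 : lang S2) :
  VPL k1 P1 -> VPL k2 P2 -> VPL (sumkind k1 k2) (wn k1 k2 (shuffle P1 P2)).
Proof.
move=> [Q1 [G1 [A1 H1]]] [Q2 [G2 [A2 H2]]].
exists (Q1 * Q2)%type, (G1 + G2)%type, (shuffle_vpa A1 A2) => w; split.
  move=> [[/H1 [q0 [qf [s [Hi [Hf R1]]]]] /H2 [q0' [qf' [s' [Hi' [Hf' R2]]]]]]].
  move=> /(nested_from_scan _ _ [::]) N.
  have [st' R] := shuffle_vpa_complete (st := [::]) R1 R2 N.
  by exists (q0, q0'), (qf, qf'), st'; rewrite /= Hi Hi' Hf Hf'.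
move=> [[q0 q0'] [[qf qf'] [st [/andP [Hi Hi'] [/andP [Hf Hf'] R]]]]].
have [R1 R2 /(nested_from_scan _ _ [::]) N] := shuffle_vpa_sound R.
split=> //; split; first by apply/H1; exists q0, qf, (proj1s st).
by apply/H2; exists q0', qf', (proj2s st).
Qed.

Theorem theorem3p14 (S1 S2 : finType) (k1 : S1 -> vkind) (k2 : S2 -> vkind)
  (P1 : lang S1) (P2 : lang S2) (prec : seq (S1 + S2) -> rel (S1 + S2)) :
  VPL k1 P1 -> wm_lang k1 P1 ->
  VPL k2 P2 -> wm_lang k2 P2 ->
  vp_contextual_order (sumkind k1 k2) prec ->
  (forall w, red prec (shuffle P1 P2) w -> wn k1 k2 (shuffle P1 P2) w) ->
  VPL (sumkind k1 k2) (red prec (shuffle P1 P2)).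
Proof.
move=> HV1 _ HV2 _ [prec_total [Qd [Gd [D [ord [_ prec_dstate]]]]]] red_wn.
have irr u a : ~~ prec u a a by case: (prec_total u).
apply: VPL_ext (VPL_dvpa_filter (descent_monitor D ord) (fun m => m.2.2)
                  (VPL_wn_shuffle HV1 HV2)) => w.
have [_ ok_descent] := descent_monitorP prec_dstate w.
split=> [[[Hw _] /ok_descent Hnd] | Hred]; first exact/red_shuffleP.
split; first exact: red_wn.
by apply/ok_descent; case/(red_shuffleP _ _ _ irr): Hred.
Qed.
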